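(* Let $R$ be a countable ring, let $A$ be any index set, and let $(M_\alpha)_{\alpha\in A}$ be a family of left $R$-modules. Suppose $B\subseteq A$ is at most countable, that $M_\alpha$ is not algebraically compact for every $\alpha\in B$, and that $M_\alpha$ is algebraically compact for every $\alpha\in A\setminus B$. Then $$\prod_{\alpha\in A}M_\alpha\Big/\bigoplus_{\alpha\in A}M_\alpha$$ is an algebraically compact left $R$-module.
   Context: A left $R$-module $M$ is algebraically compact if every system of linear equations $\sum_{j\in J} r_{ij}x_j=m_i$ ($i\in I$, $r_{ij}\in R$, each row having almost all $r_{ij}=0$, $m_i\in M$, $I,J$ arbitrary sets) whose finite subsystems are all solvable in $M$ is itself solvable in $M$ (equivalently, $M$ is pure injective). *)

From Stdlib Require List.
From HB Require Import structures.
From mathcomp Require Import all_boot all_order all_algebra.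
Set Implicit Arguments. Unset Strict Implicit. Unset Printing Implicit Defensive.
Import GRing.Theory.
Local Open Scope ring_scope.

(* A system of linear equations  sum_j r_ij x_j = m_i  (i in I) over R with
   unknowns indexed by J: each row i is given as a finite list of
   (variable, coefficient) pairs, i.e. row i has finitely many nonzero
   coefficients (repeated variables are summed). *)
Definition lin_row (R : nzRingType) (T : lmodType R) (J : Type)
  (row : seq (J * R)) (x : J -> T) : T :=
  \sum_(p <- row) p.2 *: x p.1.

Definition alg_compact (R : nzRingType) (M : lmodType R) : Prop :=
  forall (I J : Type) (row : I -> seq (J * R)) (m : I -> M),
    (forall F : seq I, exists x : J -> M,
        forall i, Stdlib.Lists.List.In i F -> lin_row (row i) x = m i) ->
    exists x : J -> M, forall i, lin_row (row i) x = m i.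

(* Elements of the product prod_a M a are dependent functions; the direct sum
   is the submodule of finitely supported ones. *)
Definition fin_supp (R : nzRingType) (A : Type) (M : A -> lmodType R)
  (f : forall a, M a) : Prop :=
  exists s : seq A, forall a, f a != 0 -> Stdlib.Lists.List.In a s.

Definition prod_lin_row (R : nzRingType) (A : Type) (M : A -> lmodType R)
  (J : Type) (row : seq (J * R)) (x : J -> forall a, M a) : forall a, M a :=
  fun a => \sum_(p <- row) p.2 *: x p.1 a.

(* Equality in the quotient  prod_a M a / (+)_a M a  of classes of
   f and g (with representatives in the product): f - g in the direct sum. *)
Definition eq_mod_sum (R : nzRingType) (A : Type) (M : A -> lmodType R)
  (f g : forall a, M a) : Prop :=
  fin_supp (fun a => f a - g a).

(* Algebraic compactness of the quotient module prod_a M a / (+)_a M a,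
   expressed with representatives: unknowns and constants of the quotient are
   classes of elements of the product, and an equation holds in the quotient
   iff it holds modulo the direct sum. *)
Definition alg_compact_prod_mod_sum (R : nzRingType) (A : Type)
  (M : A -> lmodType R) : Prop :=
  forall (I J : Type) (row : I -> seq (J * R)) (m : I -> forall a, M a),
    (forall F : seq I, exists x : J -> forall a, M a,
        forall i, Stdlib.Lists.List.In i F -> eq_mod_sum (prod_lin_row (row i) x) (m i)) ->
    exists x : J -> forall a, M a,
      forall i, eq_mod_sum (prod_lin_row (row i) x) (m i).

Definition countable_type (T : Type) : Prop :=
  exists f : T -> nat, injective f.

Definition countable_subset (T : Type) (B : T -> Prop) : Prop :=
  exists f : T -> nat, forall a b, B a -> B b -> f a = f b -> a = b.

From mathcomp Require Import all_boot all_order all_algebra.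
From mathcomp Require Import boolp classical_sets.
Set Implicit Arguments. Unset Strict Implicit. Unset Printing Implicit Defensive.
Import GRing.Theory.
Local Open Scope classical_set_scope.
Local Open Scope ring_scope.

(* Solve a system over the quotient by Zorn's lemma on consistent partial
   assignments of the unknowns, i.e. those compatible with every finite
   subsystem.  A maximal one is total: to assign one more unknown [j] it
   suffices, since [R] is countable, to solve one finite subsystem of each of
   the countably many shapes simultaneously, for two subsystems of the same
   shape admit the same homogeneous corrections at [j].  Countably many finite
   subsystems are solved at once by a diagonal argument: along the increasing
   finite unions, a coordinate is frozen at the stage where it first meets the
   error support or one of the countably many bad factors; a coordinate that
   never does lies in an algebraically compact factor, where all stages can be
   solved exactly. *)

Lemma In_has (T : Type) (p : pred T) s t : List.In t s -> p t -> has p s.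
Proof.
elim: s => [//|t' s IH] /= [->|st] pt; first by rewrite pt.
by rewrite IH ?orbT.
Qed.

Lemma seq_ub (T : Type) (f : T -> nat) (s : seq T) :
  exists N, forall t, List.In t s -> (f t <= N)%N.
Proof.
elim: s => [|t s [N leN]]; first by exists 0%N.
exists (maxn (f t) N) => t' [<-|t's]; first by rewrite leq_maxl.
by rewrite (leq_trans (leN t' t's)) ?leq_maxr.
Qed.

Fixpoint cat_upto (T : Type) (g : nat -> seq T) (n : nat) : seq T :=
  if n is n'.+1 then g n ++ cat_upto g n' else g 0%N.

Lemma in_cat_upto (T : Type) (g : nat -> seq T) n t :
  List.In t (cat_upto g n) <-> exists2 k, (k <= n)%N & List.In t (g k).
Proof.
elim: n => [|n IH] /=.
  by split=> [|[k]]; [exists 0%N | rewrite leqn0 => /eqP ->].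
rewrite List.in_app_iff IH; split=> [[tg|[k le_kn tg]]|[k]].
- by exists n.+1.
- by exists k => //; rewrite leqW.
- by rewrite leq_eqVlt ltnS => /orP[/eqP ->|le_kn tg]; [left|right; exists k].
Qed.

Lemma cat_upto_mono (T : Type) (g : nat -> seq T) n n' t :
  (n <= n')%N -> List.In t (cat_upto g n) -> List.In t (cat_upto g n').
Proof.
move=> le_nn' /in_cat_upto[k le_kn tg]; apply/in_cat_upto.
by exists k => //; rewrite (leq_trans le_kn).
Qed.

Lemma countable_subset_enum (A : Type) (B : A -> Prop) :
  countable_subset B -> exists b : nat -> seq A, forall a, B a -> exists n, List.In a (b n).
Proof.
move=> [f f_inj].
exists (fun n => if pselect (exists2 a, B a & f a = n) is left e
                 then [:: sval (cid2 e)] else [::]) => a Ba.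
exists (f a); case: pselect => [e|[]]; last by exists a.
case: (cid2 e) => a' Ba' fa' /=; left; exact: f_inj.
Qed.

Lemma countable_image_reps (T C : Type) (t0 : T) (f : T -> C) (h : C -> nat) :
  injective h -> exists rep : nat -> T, forall t, exists n, f (rep n) = f t.
Proof.
move=> h_inj.
exists (fun n => if pselect (exists t, h (f t) = n) is left e then sval (cid e) else t0).
move=> t; exists (h (f t)); apply: h_inj; case: pselect => [e|[]]; last by exists t.
exact: (proj2_sig (cid e)).
Qed.

Lemma alg_compact_nat_union (R : nzRingType) (N : lmodType R) (I J : Type)
    (row : I -> seq (J * R)) (c : I -> N) (S : nat -> I -> Prop) :
  alg_compact N ->
  (forall n n' i, (n <= n')%N -> S n i -> S n' i) ->
  (forall n, exists x, forall i, S n i -> lin_row (row i) x = c i) ->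
  exists x, forall n i, S n i -> lin_row (row i) x = c i.
Proof.
move=> N_compact S_mono S_sol.
pose T := {p : nat * I | S p.1 p.2}.
have [F|x x_sol] := N_compact T J (fun p => row (sval p).2) (fun p => c (sval p).2).
  have [n le_n] := seq_ub (fun p : T => (sval p).1) F.
  have [x x_sol] := S_sol n; exists x => p /le_n le_pn.
  exact/x_sol/(S_mono _ _ _ le_pn (proj2_sig p)).
by exists x => n i Sni; exact: (x_sol (exist _ (n, i) Sni)).
Qed.

Section FiniteSupport.
Variables (R : nzRingType) (A : Type) (M : A -> lmodType R).

Lemma eq_fin_supp (f g : forall a, M a) :
  (forall a, f a = g a) -> fin_supp f -> fin_supp g.
Proof. by move=> fg [s fs]; exists s => a; rewrite -fg; apply: fs. Qed.

Lemma fin_supp_add (f g : forall a, M a) :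
  fin_supp f -> fin_supp g -> fin_supp (fun a => f a + g a).
Proof.
move=> [s fs] [s' gs]; exists (s ++ s') => a fga; apply: List.in_or_app.
case: (eqVneq (f a) 0) => [f0|]; last by left; apply: fs.
by right; apply: gs; apply: contraNneq fga => ->; rewrite f0 addr0.
Qed.

Lemma fin_supp_opp (f : forall a, M a) : fin_supp f -> fin_supp (fun a => - f a).
Proof. by move=> [s fs]; exists s => a; rewrite oppr_eq0; apply: fs. Qed.

Lemma fin_supp_seq (I : Type) (F : seq I) (f : I -> forall a, M a) :
  (forall i, List.In i F -> fin_supp (f i)) ->
  exists s, forall i, List.In i F -> forall a, f i a != 0 -> List.In a s.
Proof.
elim: F => [|i F IH] fF; first by exists [::].
have [s fs] := fF i (or_introl erefl).
have [s' Fs'] := IH (fun i' Fi' => fF i' (or_intror Fi')).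
exists (s ++ s') => i' [<-|Fi'] a fa; apply: List.in_or_app; first by left; apply: fs.
by right; apply: Fs' fa.
Qed.

Lemma eq_mod_sum_sub (f f' g : forall a, M a) :
  eq_mod_sum f g -> eq_mod_sum f' g -> fin_supp (fun a => f a - f' a).
Proof.
move=> fg f'g; apply: eq_fin_supp (fin_supp_add fg (fin_supp_opp f'g)) => a.
by rewrite opprB addrA subrK.
Qed.

Lemma eq_mod_sum_add (f g h : forall a, M a) :
  eq_mod_sum f g -> fin_supp h -> eq_mod_sum (fun a => f a + h a) g.
Proof. by move=> fg fh; apply: eq_fin_supp (fin_supp_add fg fh) => a; rewrite addrAC. Qed.

Variable J : Type.
Implicit Types (row : seq (J * R)) (x y : J -> forall a, M a).

Lemma prod_lin_rowD row x y :
  prod_lin_row row (fun k a => x k a + y k a) =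
  (fun a => prod_lin_row row x a + prod_lin_row row y a).
Proof.
apply: functional_extensionality_dep => a.
by rewrite /prod_lin_row -big_split; apply: eq_bigr => q _; rewrite scalerDr.
Qed.

Lemma prod_lin_rowB row x y :
  prod_lin_row row (fun k a => x k a - y k a) =
  (fun a => prod_lin_row row x a - prod_lin_row row y a).
Proof.
apply: functional_extensionality_dep => a.
by rewrite /prod_lin_row -sumrB; apply: eq_bigr => q _; rewrite scalerBr.
Qed.

Lemma eq_prod_lin_row row x y :
  (forall q, List.In q row -> x q.1 = y q.1) -> prod_lin_row row x = prod_lin_row row y.
Proof.
move=> xy; apply: functional_extensionality_dep => a; rewrite /prod_lin_row.
elim: row xy => [|q row IH] xy; first by rewrite !big_nil.
by rewrite !big_cons xy ?IH //; [move=> q' rq'; apply: xy; right | left].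
Qed.

End FiniteSupport.

Lemma chain_covers_keys (T V : Type) (C : set (set (T * V))) (l : seq T) :
  total_on C subset -> (exists X, C X) ->
  exists2 X, C X & forall k v, List.In k l -> (\bigcup_(Y in C) Y) (k, v) -> exists w, X (k, w).
Proof.
move=> C_tot [X0 CX0]; elim: l => [|k l [X CX X_l]]; first by exists X0.
have [[v [Y CY Ykv]]|k_free] := pselect (exists v, (\bigcup_(Y in C) Y) (k, v)).
  have [XY|YX] := C_tot _ _ CX CY.
    exists Y => // k' v' [<- _|lk' Uk'v']; first by exists v.
    by have [w Xk'w] := X_l _ _ lk' Uk'v'; exists w; apply: XY.
  exists X => // k' v' [<- _|lk' Uk'v']; first by exists v; apply: YX.
  exact: X_l lk' Uk'v'.
exists X => // k' v' [<- Ukv'|]; first by case: k_free; exists v'.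
exact: X_l.
Qed.

Section PartialSolutions.
Variables (R : nzRingType) (A : Type) (M : A -> lmodType R).
Variables (I J : Type) (row : I -> seq (J * R)) (m : I -> forall a, M a).

Definition solves (F : seq I) (x : J -> forall a, M a) :=
  forall i, List.In i F -> eq_mod_sum (prod_lin_row (row i) x) (m i).

Definition extends (G : set (J * forall a, M a)) (x : J -> forall a, M a) :=
  forall k v, G (k, v) -> x k = v.

Definition consistent (G : set (J * forall a, M a)) :=
  forall F, exists2 x, extends G x & solves F x.

Definition row_vars (F : seq I) : seq J :=
  List.flat_map (fun i => List.map fst (row i)) F.

Lemma row_varsP F i q : List.In i F -> List.In q (row i) -> List.In q.1 (row_vars F).
Proof. by move=> Fi iq; apply/List.in_flat_map; exists i; split; last exact: List.in_map. Qed.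

Lemma solves_catl F F' x : solves (F ++ F') x -> solves F x.
Proof. by move=> sol i Fi; apply/sol/List.in_or_app; left. Qed.

Lemma solves_catr F F' x : solves (F ++ F') x -> solves F' x.
Proof. by move=> sol i Fi; apply/sol/List.in_or_app; right. Qed.

Lemma consistent_functional G k v w : consistent G -> G (k, v) -> G (k, w) -> v = w.
Proof. by move=> G_cons Gkv Gkw; have [x xG _] := G_cons [::]; rewrite -(xG _ _ Gkv) (xG _ _ Gkw). Qed.

Lemma consistent_bigcup (C : set (set (J * forall a, M a))) :
  (forall F, exists x, solves F x) ->
  C `<=` consistent -> total_on C subset -> consistent (\bigcup_(X in C) X).
Proof.
move=> sys_fin C_cons C_tot F; set U := \bigcup_(X in C) X.
have [C_ne|C0] := pselect (exists X, C X); last first.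
  by have [x x_sol] := sys_fin F; exists x => // k v [X CX _]; case: C0; exists X.
have U_fun k v w : U (k, v) -> U (k, w) -> v = w.
  move=> [X CX Xkv] [Y CY Ykw]; have [XY|YX] := C_tot _ _ CX CY.
    exact: (consistent_functional (C_cons _ CY) (XY _ Xkv)).
  exact: (consistent_functional (C_cons _ CX) _ (YX _ Ykw)).
have [X CX X_F] := chain_covers_keys (row_vars F) C_tot C_ne.
have [x xX x_sol] := C_cons _ CX F.
pose z k := if pselect (exists v, U (k, v)) is left e then sval (cid e) else x k.
have zU k v : U (k, v) -> z k = v.
  move=> Ukv; rewrite /z; case: pselect => [e|[]]; last by exists v.
  exact: U_fun (proj2_sig (cid e)) Ukv.
exists z => // i Fi; rewrite (eq_prod_lin_row (x := z) (y := x)); first exact: x_sol.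
move=> q iq; rewrite /z; case: pselect => // e.
have [w Xw] := X_F _ _ (row_varsP Fi iq) (proj2_sig (cid e)).
rewrite (xX _ _ Xw); apply: (U_fun _ _ _ (proj2_sig (cid e))); by exists X.
Qed.

Lemma consistent_total_solution G :
  consistent G -> (forall k, exists v, G (k, v)) ->
  exists x, forall i, eq_mod_sum (prod_lin_row (row i) x) (m i).
Proof.
move=> G_cons /choice[x xG]; exists x => i.
have [y yG y_sol] := G_cons [:: i].
suff <- : y = x by apply: y_sol; left.
by apply: functional_extensionality_dep => k; apply/yG/xG.
Qed.

Section CompactOffCountable.
Variable b : nat -> seq A.
Hypothesis b_compact : forall a, (forall n, ~ List.In a (b n)) -> alg_compact (M a).

Section Diagonal.
Variables (G : set (J * forall a, M a)) (K : nat -> seq I).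
Variables (xs : nat -> J -> forall a, M a) (E : nat -> seq A).
Hypothesis K_mono : forall n n' i, (n <= n')%N -> List.In i (K n) -> List.In i (K n').
Hypothesis xs_extends : forall n, extends G (xs n).
Hypothesis xs_exact : forall n i a,
  List.In i (K n) -> ~ List.In a (E n) -> prod_lin_row (row i) (xs n) a = m i a.

(* At a coordinate [a] that occurs in some [E n ++ b n] we copy the [xs p.-1]
   for the least such [p]; otherwise [M a] is algebraically compact and all
   the [K n] can be solved exactly at [a] at once. *)
Lemma diagonal_coordinate a : exists ya : J -> M a,
  (forall k v, G (k, v) -> ya k = v a) /\
  forall n i, List.In i (K n) ->
    List.In a (cat_upto (fun k => E k ++ b k) n) \/ lin_row (row i) ya = m i a.
Proof.
have [[n0 an0]|a_good] := pselect (exists n, List.In a (E n ++ b n)).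
  have ex_bad : exists n, `[< List.In a (E n ++ b n) >] by exists n0; apply/asboolP.
  case: (ex_minnP ex_bad) => p /asboolP a_bad p_min.
  exists (fun k => xs p.-1 k a); split=> [k v /xs_extends -> //|n i Kni].
  have [lt_np|le_pn] := ltnP n p; last by left; apply/in_cat_upto; exists p.
  right; apply: xs_exact; first by apply: K_mono Kni; rewrite -ltnS (ltn_predK lt_np).
  move=> a_E; have /p_min : `[< List.In a (E p.-1 ++ b p.-1) >].
    by apply/asboolP/List.in_or_app; left.
  by rewrite leqNgt ltn_predL (leq_ltn_trans (leq0n n) lt_np).
have a_compact : alg_compact (M a).
  by apply: b_compact => n bn; apply: a_good; exists n; apply: List.in_or_app; right.
pose row' (q : I + (J * forall a, M a)) :=
  match q with inl i => row i | inr kv => [:: (kv.1, 1)] end.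
pose c (q : I + (J * forall a, M a)) :=
  match q with inl i => m i a | inr kv => kv.2 a end.
pose S n (q : I + (J * forall a, M a)) :=
  match q with inl i => List.In i (K n) | inr kv => G kv end.
have S_mono n n' q : (n <= n')%N -> S n q -> S n' q.
  by case: q => [i|kv] //= /K_mono; apply.
have S_sol n : exists y, forall q, S n q -> lin_row (row' q) y = c q.
  exists (fun k => xs n k a) => -[i|[k v]] /= Sq.
    by apply: xs_exact => // aE; apply: a_good; exists n; apply: List.in_or_app; left.
  by rewrite /lin_row big_seq1 scale1r (xs_extends n Sq).
have [ya ya_sol] := alg_compact_nat_union a_compact S_mono S_sol.
exists ya; split=> [k v Gkv|n i Kni]; last by right; exact: (ya_sol n (inl i)).
by have := ya_sol 0%N (inr (k, v)) Gkv; rewrite /= /lin_row big_seq1 scale1r.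
Qed.

Lemma diagonal_solution : exists2 x, extends G x & forall n, solves (K n) x.
Proof.
pose ya a := sval (cid (diagonal_coordinate a)).
have yaP a : _ := proj2_sig (cid (diagonal_coordinate a)).
exists (fun k a => ya a k).
  by move=> k v Gkv; apply: functional_extensionality_dep => a; apply: (proj1 (yaP a)).
move=> n i Kni; exists (cat_upto (fun k => E k ++ b k) n) => a.
by case: (proj2 (yaP a) n i Kni) => // exact_a; rewrite /prod_lin_row -exact_a subrr eqxx.
Qed.

End Diagonal.

Lemma consistent_solves_nat_family G (K : nat -> seq I) :
  consistent G -> exists2 x, extends G x & forall n, solves (K n) x.
Proof.
move=> G_cons; pose K' := cat_upto K.
have /choice[xs xsP] n : exists x, extends G x /\ solves (K' n) x.
  by have [x xG x_sol] := G_cons (K' n); exists x.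
have /choice[E EP] n : exists s, forall i, List.In i (K' n) -> forall a,
    prod_lin_row (row i) (xs n) a - m i a != 0 -> List.In a s.
  exact: fin_supp_seq (proj2 (xsP n)).
have K'_mono n n' i : (n <= n')%N -> List.In i (K' n) -> List.In i (K' n').
  exact: cat_upto_mono.
have xs_exact n i a : List.In i (K' n) -> ~ List.In a (E n) ->
    prod_lin_row (row i) (xs n) a = m i a.
  move=> K'ni aE; apply/eqP; rewrite -subr_eq0; apply/negPn/negP => err.
  exact/aE/(EP n i K'ni a err).
have [x xG x_sol] := diagonal_solution K'_mono (fun n => proj1 (xsP n)) xs_exact.
exists x => // n i Kni; apply: x_sol; apply/in_cat_upto; by exists n.
Qed.

Section Extension.
Variables (fR : R -> nat) (fR_inj : injective fR).
Variables (G : set (J * forall a, M a)) (j : J).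
Hypothesis j_free : ~ exists v, G (j, v).

Definition assigned (k : J) : bool := `[< exists v, G (k, v) >].

Definition vars (F : seq I) : seq J := j :: row_vars F.
Definition rank (F : seq I) (k : J) : nat := find (fun k' => `[< k = k' >]) (vars F).
Definition var_at (F : seq I) (n : nat) : J := nth j (vars F) n.

Lemma var_at_rank F k : List.In k (vars F) -> var_at F (rank F k) = k.
Proof.
move=> Fk; have k_in : has (fun k' => `[< k = k' >]) (vars F).
  exact: In_has Fk (asboolT (erefl k)).
by have /asboolP/esym := nth_find j k_in.
Qed.

Lemma rank_j F : rank F j = 0%N.
Proof. by rewrite /rank /= asboolT. Qed.

(* [code F] is the homogeneous version of [F] with the assigned unknowns
   deleted and the others renamed by their rank; over a countable ring there
   are only countably many codes. *)
Definition code_row (F : seq I) (r : seq (J * R)) : seq (nat * R) :=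
  [seq (rank F q.1, q.2) | q <- r & ~~ assigned q.1].
Definition code (F : seq I) : seq (seq (nat * R)) :=
  List.map (fun i => code_row F (row i)) F.

Definition homog_sol (c : seq (seq (nat * R))) (h : forall a, M a) :=
  exists2 y : nat -> forall a, M a, y 0%N = h &
    forall r, List.In r c -> fin_supp (prod_lin_row r y).

Definition solution_values (F : seq I) (v : forall a, M a) :=
  exists x, [/\ extends G x, x j = v & solves F x].

Lemma prod_lin_row_code F r (y : nat -> forall a, M a) :
  prod_lin_row (code_row F r) y =
  prod_lin_row r (fun k => if assigned k then (fun a => 0) else y (rank F k)).
Proof.
apply: functional_extensionality_dep => a.
rewrite /prod_lin_row big_map big_filter big_mkcond; apply: eq_bigr => q _ /=.
by case: assigned; rewrite ?scaler0.
Qed.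

Lemma solution_values_sub F v w :
  solution_values F v -> solution_values F w -> homog_sol (code F) (fun a => v a - w a).
Proof.
move=> [x [xG xj x_sol]] [x' [x'G x'j x'_sol]].
pose d k a := x k a - x' k a.
exists (fun n => d (var_at F n)); first by rewrite /var_at /d /= xj x'j.
move=> r /List.in_map_iff[i [<- Fi]].
rewrite prod_lin_row_code (eq_prod_lin_row (y := d)).
  by rewrite /d prod_lin_rowB; apply: eq_mod_sum_sub (x_sol i Fi) (x'_sol i Fi).
move=> q iq; rewrite /assigned; case: asboolP => [[u Gu]|_].
  by apply: functional_extensionality_dep => a; rewrite /d (xG _ _ Gu) (x'G _ _ Gu) subrr.
by rewrite var_at_rank //; right; apply: row_varsP Fi iq.
Qed.

Lemma solution_values_add F v h :
  solution_values F v -> homog_sol (code F) h -> solution_values F (fun a => v a + h a).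
Proof.
move=> [x [xG xj x_sol]] [y y0 y_sol].
pose z k := if assigned k then (fun a => 0 : M a) else y (rank F k).
exists (fun k a => x k a + z k a); split.
- move=> k u Gku; apply: functional_extensionality_dep => a.
  by rewrite (xG _ _ Gku) /z /assigned asboolT ?addr0 //; exists u.
- by rewrite xj /z /assigned asboolF // rank_j y0.
move=> i Fi; rewrite prod_lin_rowD; apply: eq_mod_sum_add (x_sol i Fi) _.
rewrite /z -prod_lin_row_code; apply: y_sol.
exact: List.in_map (fun i => code_row F (row i)) _ _ Fi.
Qed.

(* The value [x j] of a simultaneous solution of one representative of each
   code fits every finite subsystem: it differs from the value [y j] of a
   solution of [F] by a homogeneous solution of the common code. *)
Lemma consistent_extend :
  consistent G -> exists v, consistent (fun q => G q \/ q = (j, v)).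
Proof.
move=> G_cons.
pose code_nat (c : seq (seq (nat * R))) := pickle [seq [seq (q.1, fR q.2) | q <- r] | r <- c].
have code_nat_inj : injective code_nat.
  move=> c c' /(pcan_inj pickleK)/inj_map; apply; apply: inj_map.
  by move=> [n r] [n' r'] /= [-> /fR_inj ->].
have [rep rep_code] := countable_image_reps [::] code code_nat_inj.
have [x xG x_sol] := consistent_solves_nat_family rep G_cons.
exists (x j) => F.
have [n code_n] := rep_code F.
have [y yG y_sol] := G_cons (F ++ rep n).
have x_rep : solution_values (rep n) (x j) by exists x.
have y_rep : solution_values (rep n) (y j) by exists y; split=> //; apply: solves_catr y_sol.
have y_F : solution_values F (y j) by exists y; split=> //; apply: solves_catl y_sol.
have h_F : homog_sol (code F) (fun a => x j a - y j a).
  by rewrite -code_n; apply: solution_values_sub x_rep y_rep.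
have [z [zG zj z_sol]] := solution_values_add y_F h_F.
exists z => // k u [/zG //|[-> ->]].
by rewrite zj; apply: functional_extensionality_dep => a; rewrite addrC subrK.
Qed.

End Extension.

End CompactOffCountable.

End PartialSolutions.

Theorem theorem4 (R : nzRingType) (A : Type) (M : A -> lmodType R)
  (B : A -> Prop) :
  countable_type R ->
  countable_subset B ->
  (forall a, B a -> ~ alg_compact (M a)) ->
  (forall a, ~ B a -> alg_compact (M a)) ->
  alg_compact_prod_mod_sum M.
Proof.
move=> [fR fR_inj] /countable_subset_enum[b bB] _ B_compact I J row m sys_fin.
have b_compact a : (forall n, ~ List.In a (b n)) -> alg_compact (M a).
  by move=> a_b; apply: B_compact => /bB[n]; apply: a_b.
have [G [G_cons G_max]] := Zorn_bigcup (fun C => consistent_bigcup (C := C) sys_fin).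
apply: (consistent_total_solution G_cons) => k.
apply: contrapT => k_free.
have [v Gv_cons] := consistent_extend b_compact fR_inj k_free G_cons.
apply: (G_max _ _ Gv_cons); split=> [q Gq|]; first by left.
by move=> /(_ (k, v) (or_intror erefl)) Gkv; apply: k_free; exists v.
Qed.
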